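(* Let $n_0,n_1$ be positive integers, let $(\eta,\omega)$ be a pair of nonnegative integer sequences $(\eta_\ell)_{\ell\ge1},(\omega_\ell)_{\ell\ge1}$ with finite support, and for $\ell\ge1$ let $(y_\ell,z_\ell)$ be the unique real solution of $y_\ell+z_\ell=\sum_{i\ge1}\frac{\eta_{\ell+i}+\omega_{\ell+i}}{(n_0+n_1)^i}$ and $y_\ell-z_\ell=\omega_\ell-\eta_\ell$ if $n_0=n_1$, $y_\ell-z_\ell=\sum_{i\ge1}\frac{\eta_{\ell+i}-\omega_{\ell+i}}{(n_0-n_1)^i}$ if $n_0\ne n_1$. Set $(y_0,z_0)=(1,0)$. Then the equations $\eta_1=n_0y_0+n_1z_0-y_1$ and $\omega_1=n_1y_0+n_0z_0-z_1$ hold if and only if $\sum_{\ell\ge1}\frac{\eta_\ell+\omega_\ell}{(n_0+n_1)^\ell}=1$ and (when $n_0\ne n_1$) $\sum_{\ell\ge1}\frac{\eta_\ell-\omega_\ell}{(n_0-n_1)^\ell}=1$. *)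

From mathcomp Require Import all_boot all_order all_algebra.
Set Implicit Arguments. Unset Strict Implicit. Unset Printing Implicit Defensive.
Import Order.TTheory GRing.Theory Num.Theory.
Local Open Scope ring_scope.

Definition fin_supp (N : nat) (a : nat -> nat) : Prop := forall l, (N < l)%N -> a l = 0%N.

(* Sum over i >= 1 of a finitely supported series whose terms vanish for i > N:
   sum_{i >= 1} a i = sum_{1 <= i <= N} a i. *)
Definition fsum (R : realFieldType) (N : nat) (a : nat -> R) : R :=
  \sum_(1 <= i < N.+1) a i.

From mathcomp Require Import all_boot all_order all_algebra.
From mathcomp Require Import lra.
Set Implicit Arguments. Unset Strict Implicit.
Import Order.TTheory GRing.Theory Num.Theory.
Local Open Scope ring_scope.

(** The two level-one equations are equivalent to their sum and difference.
    Multiplying [sum_(i >= 1) c_i / q^i] by [q] peels off [c_1] and leaves the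
    same series shifted by one index; with [q = n0 + n1] this makes the sum
    equation equivalent to the first normalisation, and for [n0 != n1], with
    [q = n0 - n1], the difference equation to the second.  For [n0 = n1] the
    difference equation is the defining relation [y_1 - z_1 = omega_1 - eta_1]. *)

Lemma fsum_shift (R : realFieldType) (N : nat) (c : nat -> R) (q : R) :
  q != 0 -> c N.+1 = 0 ->
  q * fsum N (fun i => c i / q ^+ i) = c 1%N + fsum N (fun i => c (1 + i)%N / q ^+ i).
Proof.
move=> q0 cN; rewrite /fsum mulr_sumr.
have -> : \sum_(1 <= i < N.+1) q * (c i / q ^+ i) =
          \sum_(1 <= i < N.+2) q * (c i / q ^+ i).
  by rewrite [in RHS]big_nat_recr //= cN mul0r mulr0 addr0.
rewrite big_nat_recl //=; congr (_ + _).
  by rewrite expr1 mulrC -mulrA mulVf // mulr1.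
apply: eq_bigr => i _; rewrite add1n exprS invfM !mulrA [q * c i.+1]mulrC.
by rewrite -(mulrA (c i.+1)) divff // mulr1.
Qed.

Lemma fsum_eq1_shift (R : realFieldType) (N : nat) (c : nat -> R) (q : R) :
  q != 0 -> c N.+1 = 0 ->
  fsum N (fun i => c i / q ^+ i) = 1 <->
  c 1%N = q - fsum N (fun i => c (1 + i)%N / q ^+ i).
Proof.
move=> q0 cN; have shift := fsum_shift q0 cN.
split=> [S1 | c1]; first by apply/eqP; rewrite eq_sym subr_eq -shift S1 mulr1.
by apply: (mulfI q0); rewrite shift c1 subrK mulr1.
Qed.

Lemma eq2_sum_diff (R : realFieldType) (a b c d x y : R) :
  (a = b - x /\ c = d - y) <-> (a + c = (b + d) - (x + y) /\ a - c = (b - d) - (x - y)).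
Proof. by split=> -[ac bd]; split; lra. Qed.

Theorem corollary1 (R : realFieldType) (n0 n1 : nat) (eta omega : nat -> nat)
  (N : nat) (y z : nat -> R) :
  (0 < n0)%N -> (0 < n1)%N ->
  fin_supp N eta -> fin_supp N omega ->
  (forall l, (1 <= l)%N ->
     y l + z l = @fsum R N (fun i => ((eta (l + i)%N)%:R + (omega (l + i)%N)%:R)
                                  / (n0 + n1)%:R ^+ i)) ->
  (forall l, (1 <= l)%N ->
     y l - z l = (if n0 == n1 then (omega l)%:R - (eta l)%:R
                  else @fsum R N (fun i => ((eta (l + i)%N)%:R - (omega (l + i)%N)%:R)
                                        / (n0%:R - n1%:R) ^+ i))) ->
  y 0%N = 1 -> z 0%N = 0 ->
  ((eta 1%N)%:R = n0%:R * y 0%N + n1%:R * z 0%N - y 1%N /\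
   (omega 1%N)%:R = n1%:R * y 0%N + n0%:R * z 0%N - z 1%N)
  <->
  (@fsum R N (fun l => ((eta l)%:R + (omega l)%:R) / (n0 + n1)%:R ^+ l) = 1 /\
   (n0 != n1 -> @fsum R N (fun l => ((eta l)%:R - (omega l)%:R) / (n0%:R - n1%:R) ^+ l) = 1)).
Proof.
move=> n0_gt0 _ eta_supp omega_supp sum_yz diff_yz -> ->.
rewrite !mulr1 !mulr0 !addr0 eq2_sum_diff -(natrD _ n0 n1) sum_yz // diff_yz //.
have [etaN omegaN] := (eta_supp N.+1 (ltnSn N), omega_supp N.+1 (ltnSn N)).
have sum_ne0 : (n0 + n1)%:R != 0 :> R by rewrite pnatr_eq0 -lt0n addn_gt0 n0_gt0.
have sum_eq := fsum_eq1_shift (N := N) (c := fun j => (eta j)%:R + (omega j)%:R) sum_ne0.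
rewrite /= etaN omegaN addr0 in sum_eq; have {}sum_eq := sum_eq erefl.
apply: iff_trans (and_iff_compat_r _ (iff_sym sum_eq)) _; apply: and_iff_compat_l.
case: eqP => [-> | /eqP n01]; first by rewrite subrr opprB add0r; split.
have diff_ne0 : n0%:R - n1%:R != 0 :> R by rewrite subr_eq0 eqr_nat.
have diff_eq := fsum_eq1_shift (N := N) (c := fun j => (eta j)%:R - (omega j)%:R) diff_ne0.
rewrite /= etaN omegaN subrr in diff_eq; have {}diff_eq := diff_eq erefl.
by rewrite -diff_eq; split=> // /(_ isT).
Qed.
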